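(* Let $p$ be a prime and $m\ge 2$ an integer. Let $W=\langle a_0\rangle\times\langle a_1\rangle\times\cdots\times\langle a_{p-1}\rangle$ be abelian with $a_0$ of order $p^m$ and $a_i$ of order $p^{m-1}$ for $1\le i\le p-1$, and let $\phi:W\to W$ be the map with $\phi(a_i)=a_ia_{i+1}$ for $0\le i\le p-2$ and $\phi(a_{p-1})=a_{p-1}\prod_{j=1}^{p-1}a_j^{-\binom{p}{j}}$. Then $\phi$ is an automorphism of $W$ of order $p$; in particular the semidirect product $W\rtimes\langle b_0\rangle$, with $b_0$ of order $p^{m-1}$ acting via $b_0^{-1}wb_0=\phi(w)$, is well-defined. *)

From mathcomp Require Export all_boot all_fingroup all_solvable.
Set Implicit Arguments.
Unset Strict Implicit.
Unset Printing Implicit Defensive.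

(* Write W additively.  Then phi = 1 + g, where g is the endomorphism of W
   sending a_i to a_(i+1) for i < p - 1 and a_(p-1) to
   -sum_(0 < j < p) C(p, j) a_j; it is well defined because each a_j with
   j >= 1 has order p^(m-1).  As W is abelian, the binomial theorem gives
   phi^p = sum_j C(p, j) g^j, and since g^j a_0 = a_j for j < p,
   phi^p a_0 = a_0 + sum_(0 < j < p) C(p, j) a_j + g^p a_0 = a_0.  Since phi
   commutes with g and the a_i = g^i a_0 generate W, phi^p is the identity.
   Hence phi is an automorphism of order dividing p, and phi <> 1 because
   phi a_0 = a_0 + a_1 with a_1 <> 0. *)

Import GroupScope.
Set Implicit Arguments.
Unset Strict Implicit.

Lemma eq_in_morph_gen (aT rT : finGroupType) (D : {group aT}) (A : {set aT})
    (f g : {morphism D >-> rT}) :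
  A \subset D -> {in A, f =1 g} -> {in <<A>>, f =1 g}.
Proof.
move=> sAD eqfg x /gen_prodgP[n [c Ac ->]].
have Dc i : c i \in D by apply: (subsetP sAD).
by rewrite !morph_prod //; apply: eq_bigr => i _; apply: eqfg.
Qed.

Section AbelianProducts.

Variables (gT : finGroupType) (A : {group gT}).
Hypothesis cAA : abelian A.

Lemma prodgM_abelian (I : eqType) (r : seq I) (F G : I -> gT) :
    {in r, forall i, F i \in A} -> {in r, forall i, G i \in A} ->
  \prod_(i <- r) (F i * G i) = \prod_(i <- r) F i * \prod_(i <- r) G i.
Proof.
elim: r => [|j r IHr] FA GA; first by rewrite !big_nil mulg1.
have sub_r (H : I -> gT) :
    {in j :: r, forall i, H i \in A} -> {in r, forall i, H i \in A}.
  by move=> HA i ri; rewrite HA // inE ri orbT.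
have FrA : \prod_(i <- r) F i \in A by rewrite big_seq group_prod // => i; apply: sub_r.
rewrite !big_cons IHr; [|exact: sub_r FA|exact: sub_r GA].
rewrite -!mulgA; congr (_ * _); rewrite !mulgA (centsP cAA (G j)) //.
by rewrite GA ?mem_head.
Qed.

Lemma mem_cycle_bigdprod (I : eqType) (r : seq I) (a : I -> gT) (G : {group gT}) :
  \big[dprod/1]_(i <- r) <[a i]> = G -> {in r, forall i, a i \in G}.
Proof.
move=> defG i ri; move: defG; rewrite (big_rem i ri) /= => /dprodP[[_ H _ ->] <- _ _].
by apply: (subsetP (mulG_subl H _)); apply: cycle_id.
Qed.

Lemma bigdprod_cycle_morphism (I : eqType) (r : seq I) (a b : I -> gT)
    (G : {group gT}) :
    \big[dprod/1]_(i <- r) <[a i]> = G ->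
    (forall i, b i \in A) -> (forall i, #[b i] %| #[a i]) ->
  exists2 f : {morphism G >-> gT}, {in r, forall i, f (a i) = b i} & f @* G \subset A.
Proof.
move=> + bA dv_ba; elim: r G => [|j r IHr] G.
  rewrite big_nil => <-; exists [morphism of trivm 1] => //.
  by rewrite morphim_trivm sub1G.
rewrite big_cons => defG; have [[_ H _ defH] _ _ _] := dprodP defG.
have [fH fHa fHA] := IHr H defH.
rewrite defH in defG.
pose fj := eltm_morphism (dv_ba j).
have fjA : fj @* <[a j]> \subset A.
  by rewrite morphim_cycle ?cycle_id //= eltm_id cycle_subG.
have cf : fH @* H \subset 'C(fj @* <[a j]>) by apply: sub_abelian_cent2 cAA _ _.
exists (dprodm defG cf); last by rewrite im_dprodm mul_subG.
move=> i; rewrite inE => /predU1P[-> | ri].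
  by rewrite /= dprodmEl ?cycle_id //= eltm_id.
by rewrite /= dprodmEr ?fHa ?(mem_cycle_bigdprod defH).
Qed.

End AbelianProducts.

Lemma morphic_iter (gT : finGroupType) (A : {group gT}) (f : gT -> gT) n :
  morphic A f -> {homo f : x / x \in A} -> morphic A (iter n f).
Proof.
move=> /morphicP fM fA; apply/morphicP.
elim: n => [|n IHn] x y xA yA //=.
by rewrite IHn // fM ?(iter_in _ fA).
Qed.

Definition id_plus (gT : finGroupType) (g : gT -> gT) (x : gT) := x * g x.

Section IdentityPlusEndomorphism.

Variables (gT : finGroupType) (A : {group gT}) (g : {morphism A >-> gT}).
Hypotheses (cAA : abelian A) (gA : {homo g : x / x \in A}).

Local Notation f := (id_plus g).

Lemma id_plus_mem : {homo f : x / x \in A}.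
Proof. by move=> x xA; rewrite groupM ?gA. Qed.

Lemma morphic_id_plus : morphic A f.
Proof.
apply/morphicP => x y xA yA; rewrite /id_plus morphM // -!mulgA; congr (_ * _).
by rewrite !mulgA (centsP cAA y) ?gA.
Qed.

Lemma id_plus_commute x : x \in A -> f (g x) = g (f x).
Proof. by move=> xA; rewrite /id_plus morphM ?gA. Qed.

Lemma iter_id_plus_commute n x : x \in A -> iter n f (g x) = g (iter n f x).
Proof.
move=> xA; elim: n => [|n IHn] //.
by rewrite !iterS IHn id_plus_commute // (iter_in _ id_plus_mem).
Qed.

Lemma iter_id_plus n x : x \in A ->
  iter n f x = \prod_(0 <= j < n.+1) iter j g x ^+ 'C(n, j).
Proof.
move=> xA; have gjA j k : iter j g x ^+ k \in A by rewrite groupX ?(iter_in _ gA).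
elim: n => [|n IHn]; first by rewrite big_nat1 expg1.
rewrite iterS {1}/id_plus IHn morph_prod // big_nat_recl // [in RHS]big_nat_recl //.
rewrite !bin0 !expg1 -mulgA; congr (_ * _).
under [in RHS]eq_bigr => j _ do rewrite binS expgD.
rewrite (prodgM_abelian cAA) // [in RHS]big_nat_recr //= bin_small // mulg1.
by congr (_ * _); apply: eq_bigr => j _; rewrite morphX ?(iter_in _ gA).
Qed.

End IdentityPlusEndomorphism.

Section ShiftAutomorphism.

Variables (gT : finGroupType) (W : {group gT}) (a : nat -> gT) (p m : nat).
Hypotheses (pr_p : prime p) (cWW : abelian W).
Hypothesis defW : \big[dprod/1]_(i < p) <[a i]> = W.

Local Notation Q := (\prod_(1 <= j < p) a j ^- 'C(p, j)).

Let p_gt0 : 0 < p. Proof. exact: prime_gt0. Qed.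

Lemma mem_a i : i < p -> a i \in W.
Proof.
move=> ltip; have aW := mem_cycle_bigdprod (a := fun i : 'I_p => a i) defW.
exact: (aW (Ordinal ltip) (mem_index_enum _)).
Qed.

Section Shift.

Variable g : {morphism W >-> gT}.
Hypothesis gW : {homo g : x / x \in W}.
Hypothesis g_shift : forall i, i.+1 < p -> g (a i) = a i.+1.
Hypothesis g_last : g (a p.-1) = Q.

Local Notation f := (id_plus g).

Lemma iter_shift_a0 i : i < p -> iter i g (a 0) = a i.
Proof. by elim: i => [|i IHi] // ltip; rewrite iterS IHi ?g_shift // ltnW. Qed.

Lemma iter_id_plus_a0 : iter p f (a 0) = a 0.
Proof.
have iter_p : iter p g (a 0) = Q.
  by rewrite -{1}(prednK p_gt0) iterS iter_shift_a0 ?ltn_predL.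
rewrite iter_id_plus ?mem_a // big_nat_recr //= (big_ltn p_gt0) binn iter_p.
rewrite bin0 !expg1 -mulgA /= -[RHS]mulg1; congr (_ * _).
under eq_big_nat => i /andP[_ ltip] do rewrite iter_shift_a0 //.
have aW j : j \in index_iota 1 p -> a j ^+ 'C(p, j) \in W.
  by rewrite mem_index_iota => /andP[_ ltjp]; rewrite groupX ?mem_a.
rewrite -(prodgM_abelian cWW) => [|j /aW //|j /aW]; last by rewrite groupV.
by apply: big1 => j _; apply: mulgV.
Qed.

Lemma iter_id_plus_a i : i < p -> iter p f (a i) = a i.
Proof.
elim: i => [|i IHi] ltip; first exact: iter_id_plus_a0.
by rewrite -g_shift // iter_id_plus_commute ?mem_a ?IHi // ltnW.
Qed.

Lemma iter_id_plus_id : {in W, iter p f =1 id}.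
Proof.
have hM := morphic_iter p (morphic_id_plus cWW gW) (id_plus_mem gW).
have sAW : \bigcup_(i < p) <[a i]> \subset W.
  by apply/bigcupsP => i _; rewrite cycle_subG mem_a.
move=> x xW; have {xW} : x \in << \bigcup_(i < p) <[a i]> >> by rewrite (bigdprodWY defW).
apply: (eq_in_morph_gen (f := morphm_morphism hM) (g := idm W) sAW).
move=> _ /bigcupP[i _ /cycleP[e ->]].
by rewrite /= morphX ?mem_a //= morphmE /idm iter_id_plus_a.
Qed.

Lemma id_plus_aut :
  exists2 phi : {perm gT}, phi \in Aut W & {in W, phi =1 f} /\ phi ^+ p = 1.
Proof.
pose fm := morphm_morphism (morphic_id_plus cWW gW).
have injf : 'injm fm.
  apply/injmP => x y xW yW; rewrite /= !morphmE => fxy.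
  by rewrite -[x]iter_id_plus_id // -[y]iter_id_plus_id // -(prednK p_gt0) !iterSr fxy.
have fWW : fm @* W = W.
  apply/(morphim_fixP injf) => //; apply/subsetP => _ /morphimP[x _ xW ->].
  by rewrite /= morphmE id_plus_mem.
set phi := aut injf fWW.
have phiE : {in W, phi =1 f} by move=> x xW; rewrite autE //= morphmE.
exists phi; first exact: Aut_aut.
split=> //; apply/permP => x; rewrite permX perm1.
have [xW | xW] := boolP (x \in W); last first.
  by apply: iter_fix; rewrite (out_Aut (Aut_aut injf fWW)).
have iter_phi n : iter n phi x = iter n f x.
  by elim: n => //= n ->; rewrite phiE // (iter_in _ (id_plus_mem gW)).
by rewrite iter_phi iter_id_plus_id.
Qed.

End Shift.

Hypothesis order_a0 : #[a 0] = (p ^ m)%N.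
Hypothesis order_a : forall i, 1 <= i < p -> #[a i] = (p ^ m.-1)%N.

Lemma dvdn_order_a i : i < p -> p ^ m.-1 %| #[a i].
Proof.
case: i => [_|i ltip]; last by rewrite order_a.
by rewrite order_a0 dvdn_exp2l ?leq_pred.
Qed.

Lemma Q_Ldiv : Q \in 'Ldiv_(p ^ m.-1)(W).
Proof.
pose L := Group (group_Ldiv (p ^ m.-1) cWW).
have aL j : 1 <= j < p -> a j \in L.
  case/andP=> j_ge1 ltjp; apply/LdivP.
  by rewrite mem_a // -(order_a (i := j)) ?j_ge1 ?expg_order.
rewrite big_nat_cond; apply: (group_prod (G := L)) => j /andP[/aL aLj _].
by rewrite groupV groupX.
Qed.

Lemma exists_shift_morphism :
  exists2 g : {morphism W >-> gT}, {homo g : x / x \in W} &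
    (forall i, i.+1 < p -> g (a i) = a i.+1) /\ g (a p.-1) = Q.
Proof.
have /LdivP[QW Q_exp] := Q_Ldiv.
pose b i := if i.+1 < p then a i.+1 else Q.
have bW i : b i \in W by rewrite /b; case: ifP => // /mem_a.
have dv_ba (i : 'I_p) : #[b i] %| #[a i].
  apply: dvdn_trans (dvdn_order_a (ltn_ord i)); rewrite /b.
  by case: ifP => [lt_i1p | _]; rewrite ?order_a ?order_dvdn ?Q_exp.
have [g ga gW] := bigdprod_cycle_morphism cWW (a := fun i : 'I_p => a i)
  (b := fun i : 'I_p => b i) defW (fun i => bW i) dv_ba.
have gb i : i < p -> g (a i) = b i.
  by move=> ltip; apply: (ga (Ordinal ltip) (mem_index_enum _)).
exists g; first by move=> x xW; apply: (subsetP gW); apply: mem_morphim.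
split=> [i lt_i1p | ]; first by rewrite gb ?(ltnW lt_i1p) // /b lt_i1p.
by rewrite gb ?ltn_predL // /b prednK // ltnn.
Qed.

End ShiftAutomorphism.

Theorem mainTheorem14 (gT : finGroupType) (W : {group gT}) (a : nat -> gT)
    (p m : nat) :
  prime p -> 2 <= m ->
  \big[dprod/1]_(i < p) <[a i]> = W ->
  abelian W ->
  #[a 0] = (p ^ m)%N ->
  (forall i, 1 <= i < p -> #[a i] = (p ^ m.-1)%N) ->
  exists2 phi : {perm gT}, phi \in Aut W &
    [/\ forall i, i.+1 < p -> phi (a i) = a i * a i.+1,
        phi (a p.-1) = a p.-1 * \prod_(1 <= j < p) (a j) ^- 'C(p, j),
        #[phi] = p
      & phi ^+ (p ^ m.-1)%N = 1].
Proof.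
move=> pr_p m_ge2 defW cWW order_a0 order_a.
have [g gW [g_shift g_last]] := exists_shift_morphism pr_p cWW defW order_a0 order_a.
have [phi Aut_phi [phiE phi_p]] := id_plus_aut pr_p cWW defW gW g_shift g_last.
have p_gt1 := prime_gt1 pr_p; have m1_gt0 : 0 < m.-1 by rewrite ltn_predRL.
have phi_a0 : phi (a 0) = a 0 * a 1%N.
  by rewrite phiE ?(mem_a defW) ?prime_gt0 // /id_plus g_shift.
exists phi => //; split.
- by move=> i lt_i1p; rewrite phiE ?(mem_a defW) ?(ltnW lt_i1p) // /id_plus g_shift.
- by rewrite phiE ?(mem_a defW) ?ltn_predL ?prime_gt0 // /id_plus g_last.
- apply/(prime_nt_dvdP pr_p); last by rewrite order_dvdn phi_p.
  rewrite order_eq1; apply/eqP => phi1.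
  move: phi_a0; rewrite phi1 perm1 -{1}[a 0]mulg1 => /mulgI a1.
  move: (order_a 1%N p_gt1); rewrite -a1 order1 => /eqP.
  by rewrite eq_sym -(expn0 p) eqn_exp2l // gtn_eqF.
- by rewrite -(prednK m1_gt0) expnS expgM phi_p expg1n.
Qed.
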